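(* Let ${\mathbf T}$ be a thinning matrix such that ${\mathbf T}_{n,n}>0$ and ${\mathbf T}_{n,n-1}>0$ for all $n\in\mathbb N$. Let $N$ be a random variable with law $\nu$ on $\mathbb N_0$ such that, if $\nu_{n_0}=0$ for some $n_0$, then $\nu_n=0$ for all $n\ge n_0$. Let ${\mathbf Q}$ be the corresponding condensation matrix. Then for all non-negative functions $g$ on $\mathbb N_0$, $$\mathbb E\Big[g(N)\,\frac{{\mathbf T}_{N,N-1}}{{\mathbf T}_{N-1,N-1}}\Big]=\mathbb E\Big[g(N+1)\,\frac{{\mathbf Q}_{N,N+1}}{{\mathbf Q}_{N,N}}\Big],$$ with the convention that $\frac{{\mathbf T}_{0,-1}}{{\mathbf T}_{-1,-1}}=0$.
   Context: A thinning matrix is a stochastic matrix ${\mathbf T}=({\mathbf T}_{n,k})_{n,k\in\mathbb N_0}$ with ${\mathbf T}_{n,k}=0$ for $k>n$. Let $\nu'=\nu{\mathbf T}$, i.e. $\nu'_k=\sum_n\nu_n{\mathbf T}_{n,k}$. The condensation matrix corresponding to $\nu$ and ${\mathbf T}$ is defined as follows. Let $N_\ast$ have conditional law ${\mathbf T}_{N,\cdot}$ given $N$. Let $\Upsilon$ be a stochastic matrix with $\mathbb E\,g(N_\ast,N-N_\ast)=\sum_{k,l}\nu'_k\Upsilon_{k,l}g(k,l)$ for all non-negative $g$. Then ${\mathbf Q}_{k,n}=\Upsilon_{k,n-k}$ for $k\le n$ and ${\mathbf Q}_{k,n}=0$ for $k>n$. Equivalently, ${\mathbf Q}$ is a stochastic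 matrix satisfying $\nu'_k{\mathbf Q}_{k,n}=\nu_n{\mathbf T}_{n,k}$ for all $k,n$. *)

(* Laws and matrices on N_0 = nat,
   real-valued over an abstract R : realType; infinite sums of non-negative
   terms are taken in the extended reals \bar R (so expectations may be +oo). *)
From mathcomp Require Import all_boot all_order all_algebra.
From mathcomp Require Import all_classical all_reals all_analysis.
Set Implicit Arguments. Unset Strict Implicit. Unset Printing Implicit Defensive.
Import Order.TTheory GRing.Theory Num.Theory.
Local Open Scope ring_scope.
Local Open Scope ereal_scope.

Definition is_law (R : realType) (nu : nat -> R) : Prop :=
  (forall n, (0 <= nu n)%R) /\ \sum_(n <oo) (nu n)%:E = 1%E.

Definition stochastic (R : realType) (M : nat -> nat -> R) : Prop :=
  (forall n k, (0 <= M n k)%R) /\ (forall n, \sum_(k <oo) (M n k)%:E = 1%E).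

Definition thinning (R : realType) (T : nat -> nat -> R) : Prop :=
  stochastic T /\ (forall n k, (n < k)%N -> T n k = 0%R).

Definition thinned_law (R : realType) (nu : nat -> R) (T : nat -> nat -> R)
  (k : nat) : \bar R := \sum_(n <oo) (nu n * T n k)%:E.

Definition condensation (R : realType) (nu : nat -> R) (T : nat -> nat -> R)
  (Q : nat -> nat -> R) : Prop :=
  stochastic Q /\ (forall k n, (n < k)%N -> Q k n = 0%R) /\
  (forall k n, thinned_law nu T k * (Q k n)%:E = (nu n * T n k)%:E).

Definition Tratio (R : realType) (T : nat -> nat -> R) (n : nat) : R :=
  match n with 0 => 0%R | m.+1 => (T m.+1 m / T m m)%R end.

(** The condensation identity [nu'_k Q_{k,n} = nu_n T_{n,k}] gives
    [Q_{n,n+1} / Q_{n,n} = nu_{n+1} T_{n+1,n} / (nu_n T_{n,n})] whenever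
    [nu_n > 0], the common factor [nu'_n] being finite and non-zero because it
    multiplies something finite into [nu_n T_{n,n} <> 0].  Hence the [n]-th
    term on the right equals the [(n+1)]-th term on the left, which is the
    identity after shifting the left series by one (its term at [0] vanishes).
    When [nu_n = 0], the support hypothesis forces [nu_{n+1} = 0] and both
    terms vanish. *)
From mathcomp Require Import all_boot all_order all_algebra.
From mathcomp Require Import all_classical all_reals all_analysis.
From mathcomp Require Import ring.
Import Order.TTheory GRing.Theory Num.Theory.
Local Open Scope ring_scope.
Local Open Scope ereal_scope.

Lemma nneseries_shift {R : realType} (f : nat -> \bar R) :
  (forall n, 0 <= f n) -> f 0%N = 0 ->
  \sum_(n <oo) f n = \sum_(n <oo) f n.+1.
Proof.
move=> f_ge0 f0.
rewrite nneseries_recl // f0 add0e -nneseries_addn //.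
by apply: eq_eseriesr => n _; rewrite addn1.
Qed.

Lemma mule_EFin_fin_neq0 {R : realType} [x : \bar R] [q c : R] :
  x * q%:E = c%:E -> c != 0%R -> exists2 r, x = r%:E & r != 0%R.
Proof.
case: x => [r| |] xq c_neq0.
- exists r => //; apply: contra_neq c_neq0 => r0.
  by move: xq; rewrite r0 mul0e => -[<-].
- by move: xq c_neq0; rewrite mulyr; case: sgrP => _;
    rewrite ?mul0e ?mul1e ?mulN1e // => -[<-]; rewrite eqxx.
- by move: xq c_neq0; rewrite mulNyr; case: sgrP => _;
    rewrite ?mul0e ?mul1e ?mulN1e // => -[<-]; rewrite eqxx.
Qed.

Lemma divr_mule_EFin {R : realType} [x : \bar R] [a b c d : R] :
  x * a%:E = b%:E -> x * c%:E = d%:E -> b != 0%R -> (c / a = d / b)%R.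
Proof.
move=> xa xc b_neq0.
have [r xr r_neq0] := mule_EFin_fin_neq0 xa b_neq0.
move: xa xc; rewrite xr => -[<-] [<-].
by rewrite -[in RHS]mulf_div divff ?mul1r.
Qed.

Lemma thinning00 {R : realType} (T : nat -> nat -> R) :
  thinning T -> T 0%N 0%N = 1%R.
Proof.
move=> [[T_ge0 T_sum1] T_lower].
have := T_sum1 0%N.
rewrite nneseries_recl //; last by move=> k _; rewrite lee_fin.
rewrite eseries0 ?adde0; first by case.
by move=> k k_gt0 _; rewrite T_lower.
Qed.

Lemma Tratio_ge0 {R : realType} (T : nat -> nat -> R) n :
  thinning T -> (0 <= Tratio T n)%R.
Proof.
move=> [[T_ge0 _] _]; case: n => [|n] //=.
by rewrite divr_ge0.
Qed.

Theorem mainTheorem2 (R : realType) (T : nat -> nat -> R) (nu : nat -> R)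
  (Q : nat -> nat -> R) (g : nat -> R) :
  thinning T ->
  (forall n, (0 < n)%N -> (0 < T n n)%R /\ (0 < T n n.-1)%R) ->
  is_law nu ->
  (forall n0, nu n0 = 0%R -> forall n, (n0 <= n)%N -> nu n = 0%R) ->
  condensation nu T Q ->
  (forall n, (0 <= g n)%R) ->
  \sum_(n <oo) (nu n * (g n * Tratio T n))%:E =
  \sum_(n <oo) (nu n * (g n.+1 * (Q n n.+1 / Q n n)))%:E.
Proof.
move=> thT T_pos [nu_ge0 _] nu_support [_ [_ nuQ]] g_ge0.
have Tnn_neq0 n : T n n != 0%R.
  case: n => [|n]; first by rewrite thinning00 ?oner_neq0.
  by rewrite gt_eqF //; case: (T_pos n.+1).
rewrite nneseries_shift; last 2 first.
- by move=> n; rewrite lee_fin !mulr_ge0 ?Tratio_ge0.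
- by rewrite /= !mulr0.
apply: eq_eseriesr => n _ /=; congr EFin.
have [nun0|nun_neq0] := eqVneq (nu n) 0%R.
  by rewrite nun0 (nu_support n nun0) // !mul0r.
rewrite (divr_mule_EFin (nuQ n n) (nuQ n n.+1)) ?mulf_neq0 //.
by field; rewrite nun_neq0 Tnn_neq0.
Qed.
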